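(* In NLML, define $fresh_{\tau;\alpha}(x) := \exists a{:}\alpha.\ a\wedge\lceil a\# x\rceil$. Then the following are valid in NLML: (F1') $(fresh(x)\ fresh(x))\cdot x = x$; (F2') $fresh_{\alpha;\alpha}(a{:}\alpha)=\neg a$; (F3') $fresh_{\alpha;\alpha'}(a{:}\alpha)=\top_{\alpha'}$ for name sorts $\alpha\neq\alpha'$; (F4') $\forall x{:}\tau.\exists a{:}\alpha.\ a\in fresh(x)$. Conversely, the nominal-logic freshness axioms (F1) $a\#x\wedge a'\#x\Rightarrow (a\ a')\cdot x=x$, (F2) $a\#a'\iff a\neq a'$, (F3) $\forall a{:}\alpha,a'{:}\alpha'.\ a\#a'$ ($\alpha\ne\alpha'$), and (F4) $\forall\vec x.\exists a.\ a\#\vec x$ are provable from (F1')–(F4').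
   Context: Matching logic semantics: patterns denote sets; symbols (such as swapping $(-\ -)\cdot -$) applied to patterns are interpreted by pointwise extension to sets of arguments; $M_{Pred}=\{\star\}$; $\lceil\cdot\rceil$ coerces a $Pred$-pattern to another sort ($\{\star\}\mapsto$ whole carrier, $\emptyset\mapsto\emptyset$); $x\in\phi$ abbreviates $x\vee\phi=\phi$; $\neg$ is complement; $\top_{\alpha'}$ denotes the whole carrier of $\alpha'$. Sorts are closed under finite products, so $\tau$ may be a product sort. NLML is matching logic over a nominal-logic signature (name sorts, swapping $(a\ b)\cdot x$, abstraction $[a]x$, freshness predicate $a\#x$ with result sort $Pred$) with axiom set $Ax_{NLML}$: (S1) $(a\ a)\cdot x=x$; (S2) $(a\ a')\cdot(a\ a')\cdot x=x$; (S3) $(a\ a')\cdot a=a'$; (EV) $(a\ b)\cdot\sigma(\vec x)=\sigma((a\ b)\cdot\vec x)$ for every symbol $\sigma$; (P) $\forall x{:}Pred.\ x=\top_{Pred}$; (F1)–(F4) as in the claim; (A1) $[a]x=[a']x' \iff (a=a'\wedge x=x')\vee(a\#x'\wedge (a\ a')\cdot x=x')$; (A2) $\forall x{:}[\alpha]\tau.\exists a,y.\ x=[a]y$; and function axioms for constants and function symbols. *)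

Set Implicit Arguments.

(* Sets of elements: matching-logic patterns denote such sets. *)
Definition pset (T : Type) := T -> Prop.
Definition peq {T} (A B : pset T) : Prop := forall y, A y <-> B y.
Definition psing {T} (x : T) : pset T := fun y => y = x.
Definition ptop {T} : pset T := fun _ => True.
Definition pnot {T} (A : pset T) : pset T := fun y => ~ A y.
Definition pand {T} (A B : pset T) : pset T := fun y => A y /\ B y.
Definition por  {T} (A B : pset T) : pset T := fun y => A y \/ B y.
Definition pexists {T U} (F : U -> pset T) : pset T := fun y => exists u, F u y.

Inductive sort (NS BS : Type) : Type :=
| SName : NS -> sort NS BS
| SBase : BS -> sort NS BS
| SProd : sort NS BS -> sort NS BS -> sort NS BS
| SAbs  : NS -> sort NS BS -> sort NS BS
| SPred : sort NS BS.
Arguments SName {NS BS}. Arguments SBase {NS BS}. Arguments SProd {NS BS}.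
Arguments SAbs {NS BS}. Arguments SPred {NS BS}.

(* A matching-logic model (structure) of the nominal signature: carriers and
   symbol interpretations M_σ : M_{s1} × ... × M_{sn} -> P(M_s). *)
Record NLStruct (NS BS : Type) := {
  car   : sort NS BS -> Type;
  swp   : forall (al : NS) (t : sort NS BS),
            car (SName al) -> car (SName al) -> car t -> pset (car t);
  frsh  : forall (al : NS) (t : sort NS BS),
            car (SName al) -> car t -> pset (car SPred);
  absn  : forall (al : NS) (t : sort NS BS),
            car (SName al) -> car t -> pset (car (SAbs al t));
  pairs : forall (s1 s2 : sort NS BS),
            car s1 -> car s2 -> pset (car (SProd s1 s2))
}.

Section Sem.
Variables (NS BS : Type) (M : NLStruct NS BS).
Local Notation S := (sort NS BS).
Local Notation C := (car M).

(* pointwise extension of symbols to sets of arguments *)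
Definition swapP (al : NS) (t : S) (A B : pset (C (SName al))) (X : pset (C t))
  : pset (C t) :=
  fun y => exists a b x, A a /\ B b /\ X x /\ swp M al t a b x y.
Definition freshP (al : NS) (t : S) (A : pset (C (SName al))) (X : pset (C t))
  : pset (C SPred) :=
  fun y => exists a x, A a /\ X x /\ frsh M al t a x y.
Definition absP (al : NS) (t : S) (A : pset (C (SName al))) (X : pset (C t))
  : pset (C (SAbs al t)) :=
  fun y => exists a x, A a /\ X x /\ absn M al t a x y.
Definition pairP (s1 s2 : S) (X1 : pset (C s1)) (X2 : pset (C s2))
  : pset (C (SProd s1 s2)) :=
  fun y => exists x1 x2, X1 x1 /\ X2 x2 /\ pairs M s1 s2 x1 x2 y.

Definition ceilP (s : S) (P : pset (C SPred)) : pset (C s) :=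
  fun _ => exists p, P p.

(* validity of the Pred-pattern a # x at a valuation *)
Definition fresh_holds (al : NS) (t : S) (a : C (SName al)) (x : C t) : Prop :=
  exists p, frsh M al t a x p.

Definition freshPat (al : NS) (t : S) (x : C t) : pset (C (SName al)) :=
  pexists (fun a : C (SName al) =>
    pand (psing a) (ceilP (SName al) (frsh M al t a x))).

Arguments swapP {al t}.
Arguments freshP {al t}.
Arguments absP {al t}.
Arguments pairP {s1 s2}.
Arguments fresh_holds {al t}.
Arguments freshPat al {t}.

(* function axiom ∀x⃗.∃y. f(x⃗) = y *)
Definition functional2 {A B R} (f : A -> B -> pset R) : Prop :=
  forall a b, exists y, peq (f a b) (psing y).
Definition functional3 {A B D R} (f : A -> B -> D -> pset R) : Prop :=
  forall a b d, exists y, peq (f a b d) (psing y).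

(* Ax_NLML without (F1)-(F4) *)
Definition NL_base_axioms : Prop :=
  (* carriers are nonempty (matching-logic models) *)
  (forall s : S, inhabited (C s)) /\
  (forall al t, functional3 (swp M al t)) /\
  (forall al t, functional2 (absn M al t)) /\
  (forall s1 s2, functional2 (pairs M s1 s2)) /\
  (forall al t (a : C (SName al)) (x : C t), peq (swp M al t a a x) (psing x)) /\
  (forall al t (a a' : C (SName al)) (x : C t),
     peq (swapP (psing a) (psing a') (swp M al t a a' x)) (psing x)) /\
  (forall al (a a' : C (SName al)), peq (swp M al (SName al) a a' a) (psing a')) /\
  (forall al be t (a b : C (SName al)) (c d : C (SName be)) (x : C t),
     peq (swapP (psing a) (psing b) (swp M be t c d x))
         (swapP (swp M al (SName be) a b c) (swp M al (SName be) a b d)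
                (swp M al t a b x))) /\
  (forall al be t (a b : C (SName al)) (c : C (SName be)) (x : C t),
     peq (swapP (psing a) (psing b) (frsh M be t c x))
         (freshP (swp M al (SName be) a b c) (swp M al t a b x))) /\
  (forall al be t (a b : C (SName al)) (c : C (SName be)) (x : C t),
     peq (swapP (psing a) (psing b) (absn M be t c x))
         (absP (swp M al (SName be) a b c) (swp M al t a b x))) /\
  (forall al s1 s2 (a b : C (SName al)) (x1 : C s1) (x2 : C s2),
     peq (swapP (psing a) (psing b) (pairs M s1 s2 x1 x2))
         (pairP (swp M al s1 a b x1) (swp M al s2 a b x2))) /\
  (forall x : C SPred, peq (psing x) ptop) /\
  (forall al t (a a' : C (SName al)) (x x' : C t),
     peq (absn M al t a x) (absn M al t a' x') <->
     ((a = a' /\ x = x') \/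
      (fresh_holds a x' /\ peq (swp M al t a a' x) (psing x')))) /\
  (forall al t (x : C (SAbs al t)),
     exists (a : C (SName al)) (y : C t), peq (psing x) (absn M al t a y)).

Definition ax_F1 : Prop :=
  forall al t (a a' : C (SName al)) (x : C t),
    fresh_holds a x -> fresh_holds a' x -> peq (swp M al t a a' x) (psing x).
Definition ax_F2 : Prop :=
  forall al (a a' : C (SName al)), fresh_holds a a' <-> a <> a'.
Definition ax_F3 : Prop :=
  forall al al' (a : C (SName al)) (a' : C (SName al')),
    al <> al' -> fresh_holds a a'.
(* ∀x⃗.∃a. a # x⃗ ; a tuple x⃗ is a single variable of a (product) sort *)
Definition ax_F4 : Prop :=
  forall al t (x : C t), exists a : C (SName al), fresh_holds a x.

Definition ax_F1' : Prop :=
  forall al t (x : C t),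
    peq (swapP (freshPat al x) (freshPat al x) (psing x)) (psing x).
Definition ax_F2' : Prop :=
  forall al (a : C (SName al)), peq (freshPat al a) (pnot (psing a)).
Definition ax_F3' : Prop :=
  forall al al' (a : C (SName al)), al <> al' -> peq (freshPat al' a) ptop.
Definition ax_F4' : Prop :=
  forall al t (x : C t), exists a : C (SName al),
    peq (por (psing a) (freshPat al x)) (freshPat al x).

End Sem.


Arguments swapP {NS BS M al t}.
Arguments freshP {NS BS M al t}.
Arguments absP {NS BS M al t}.
Arguments pairP {NS BS M s1 s2}.
Arguments ceilP {NS BS M} s.
Arguments fresh_holds {NS BS M al t}.
Arguments freshPat {NS BS M} al {t}.

Definition NLML_model (NS BS : Type) (M : NLStruct NS BS) : Prop :=
  NL_base_axioms M /\ ax_F1 M /\ ax_F2 M /\ ax_F3 M /\ ax_F4 M.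

(* The pattern fresh_{τ;α}(x) denotes exactly the names a with a # x, so each
   primed axiom is the corresponding freshness axiom read set-theoretically.
   Only (F1) needs more: in one direction the swapping set is nonempty because
   (F4) provides a fresh name and (S1) swaps it with itself; in the other,
   the singleton-valued swapping (function axiom) turns the set equation of
   (F1') into an equation between elements. *)

From Stdlib Require Import Setoid.

Section FreshPattern.

Variables (NS BS : Type) (M : NLStruct NS BS).

Lemma freshPatE al t (x : car M t) (a : car M (SName al)) :
  freshPat al x a <-> fresh_holds a x.
Proof.
  unfold freshPat, pexists, pand, psing, ceilP, fresh_holds. split.
  - intros [u [-> Hu]]. exact Hu.
  - intros Ha. exists a. split; [reflexivity | exact Ha].
Qed.

Lemma swap_freshPat_selfE al t (x y : car M t) :
  swapP (freshPat al x) (freshPat al x) (psing x) y <->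
  exists a a', fresh_holds a x /\ fresh_holds a' x /\ swp M al t a a' x y.
Proof.
  unfold swapP, psing. split.
  - intros [a [a' [z [Ha [Ha' [-> Hs]]]]]].
    exists a, a'. rewrite <- !freshPatE. auto.
  - intros [a [a' [Ha [Ha' Hs]]]].
    exists a, a', x. rewrite !freshPatE. auto.
Qed.

Lemma ax_F1'_of_F1 :
  (forall al t (a : car M (SName al)) (x : car M t),
     peq (swp M al t a a x) (psing x)) ->
  ax_F1 M -> ax_F4 M -> ax_F1' M.
Proof.
  intros S1 F1 F4 al t x y. rewrite swap_freshPat_selfE. unfold psing. split.
  - intros [a [a' [Ha [Ha' Hs]]]]. exact (proj1 (F1 al t a a' x Ha Ha' y) Hs).
  - intros ->. destruct (F4 al t x) as [a Ha].
    exists a, a. repeat split; try exact Ha. apply S1. reflexivity.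
Qed.

Lemma ax_F1_of_F1' :
  (forall al t, functional3 (swp M al t)) -> ax_F1' M -> ax_F1 M.
Proof.
  intros swp_fun F1' al t a a' x Ha Ha'.
  assert (swap_fixes : forall y, swp M al t a a' x y -> y = x).
  { intros y Hy. apply (F1' al t x y), swap_freshPat_selfE. exists a, a'. auto. }
  destruct (swp_fun al t a a' x) as [y0 Hy0].
  assert (y0 = x) as -> by (apply swap_fixes, Hy0; reflexivity).
  intro y. unfold psing. split.
  - apply swap_fixes.
  - intros ->. apply Hy0. reflexivity.
Qed.

Lemma ax_F2'_iff : ax_F2' M <-> ax_F2 M.
Proof.
  unfold ax_F2', ax_F2, peq, pnot, psing. setoid_rewrite freshPatE.
  split; intros F2 al a a'; rewrite F2; split; intros Hne E; apply Hne; auto.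
Qed.

Lemma ax_F3'_iff : ax_F3' M <-> ax_F3 M.
Proof.
  unfold ax_F3', ax_F3, peq, ptop. setoid_rewrite freshPatE. split.
  - intros F3' al al' a a' Hne. apply (F3' al' al a'); auto.
  - intros F3 al al' a Hne a'. split; auto.
Qed.

Lemma ax_F4'_iff : ax_F4' M <-> ax_F4 M.
Proof.
  unfold ax_F4', ax_F4, peq, por, psing. setoid_rewrite freshPatE. split.
  - intros F4' al t x. destruct (F4' al t x) as [a Ha].
    exists a. apply Ha. left. reflexivity.
  - intros F4 al t x. destruct (F4 al t x) as [a Ha].
    exists a. intro b. split; [intros [-> | Hb] |]; auto.
Qed.

End FreshPattern.

Theorem mainTheorem4 :
  (forall (NS BS : Type) (M : NLStruct NS BS),
     NLML_model M -> ax_F1' M /\ ax_F2' M /\ ax_F3' M /\ ax_F4' M) /\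
  (forall (NS BS : Type) (M : NLStruct NS BS),
     NL_base_axioms M -> ax_F1' M -> ax_F2' M -> ax_F3' M -> ax_F4' M ->
     ax_F1 M /\ ax_F2 M /\ ax_F3 M /\ ax_F4 M).
Proof.
  split.
  - intros NS BS M [[_ [_ [_ [_ [S1 _]]]]] [F1 [F2 [F3 F4]]]].
    rewrite ax_F2'_iff, ax_F3'_iff, ax_F4'_iff.
    auto using ax_F1'_of_F1.
  - intros NS BS M [_ [swp_fun _]] F1' F2' F3' F4'.
    rewrite <- ax_F2'_iff, <- ax_F3'_iff, <- ax_F4'_iff.
    auto using ax_F1_of_F1'.
Qed.
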